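(* Let $p\neq q$ be primes, $G_1$ a finite abelian group of order $p^e$ and $G_2$ a finite abelian group of order $q^f$. Let $R_i=\mathbf{Z}[G_i]$, $S_i$ the integral closure of $R_i$ in $\mathbf{Q}[G_i]$, and $I_i$ the conductor of $S_i$ into $R_i$. Then the conductor of $S_1\otimes S_2$ into $R_1\otimes R_2\cong\mathbf{Z}[G_1\times G_2]$ is $I_1\otimes I_2$.
   Context: For a commutative ring $S$ with subring $R$, the conductor of $S$ into $R$ is $\{s\in S: sS\subseteq R\}$, the largest ideal of $S$ contained in $R$. Tensor products are over $\mathbf{Z}$; all groups involved are free abelian, so $I_1\otimes I_2\subseteq R_1\otimes R_2\subseteq S_1\otimes S_2$. *)

From HB Require Import structures.
From mathcomp Require Import all_boot all_order all_algebra all_fingroup.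
Set Implicit Arguments. Unset Strict Implicit. Unset Printing Implicit Defensive.
Import Order.TTheory GRing.Theory Num.Theory.
Local Open Scope ring_scope.

(* The rational group algebra Q[G] of a finite group gT (the whole type),
   represented as functions gT -> rat, with convolution product. *)
Definition QG (gT : finGroupType) := {ffun gT -> rat}.

Definition gmul (gT : finGroupType) (a b : QG gT) : QG gT :=
  [ffun g => \sum_(h : gT) a h * b (h^-1 * g)%g].

Definition gone (gT : finGroupType) : QG gT := [ffun g => (g == 1%g)%:R].

Definition gpow (gT : finGroupType) (a : QG gT) (n : nat) : QG gT :=
  iter n (gmul a) (gone gT).

Definition ZG (gT : finGroupType) (a : QG gT) : Prop :=
  forall g, a g \is a Num.int.

Definition integral_over (gT : finGroupType) (R : QG gT -> Prop) (s : QG gT) : Prop :=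
  exists n (c : 'I_n -> QG gT), (forall i, R (c i)) /\
    gpow s n + \sum_(i < n) gmul (c i) (gpow s i) = 0.

Definition intclos (gT : finGroupType) (s : QG gT) : Prop :=
  integral_over (@ZG gT) s.

Definition conductor (gT : finGroupType) (S R : QG gT -> Prop) (s : QG gT) : Prop :=
  S s /\ forall t, S t -> R (gmul s t).

Definition condG (gT : finGroupType) : QG gT -> Prop :=
  conductor (@intclos gT) (@ZG gT).

Definition tens (gT1 gT2 : finGroupType) (a : QG gT1) (b : QG gT2) : QG (gT1 * gT2)%type :=
  [ffun g => a g.1 * b g.2].

(* A (x) B, the image in Q[G1 x G2] of the tensor product of the subgroups A, B:
   all Z-linear combinations of pure tensors a (x) b with a in A, b in B. *)
Definition tensor_span (gT1 gT2 : finGroupType) (A : QG gT1 -> Prop) (B : QG gT2 -> Prop)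
  (x : QG (gT1 * gT2)%type) : Prop :=
  exists n (c : 'I_n -> int) (a : 'I_n -> QG gT1) (b : 'I_n -> QG gT2),
    (forall i, A (a i) /\ B (b i)) /\ x = \sum_(i < n) (tens (a i) (b i)) *~ c i.

From HB Require Import structures.
From mathcomp Require Import all_boot all_order all_algebra all_fingroup.
From mathcomp Require Import all_field all_character.
From Stdlib Require Import Classical Wf_nat.
Set Implicit Arguments. Unset Strict Implicit. Unset Printing Implicit Defensive.
Import Order.TTheory GRing.Theory Num.Theory.
Local Open Scope ring_scope.

(* For an abelian group G of order n, each character of G extends to a ring
   morphism Q[G] -> C sending S into the algebraic integers, and character
   inversion then gives n S <= Z[G].  So the lattice L spanned by the
   translates of S2 satisfies Z^G2 <= L <= n^-1 Z^G2; such a lattice has a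
   basis (v_j) whose dual basis (w_j) pairs integrally with L.  An element x
   of the conductor is then sum_j a_j (x) w_j, where a_j contracts the second
   factor of x against v_j: each w_j multiplies S2 into Z[G2] because it pairs
   integrally with the translates of S2, and each a_j multiplies S1 into
   Z[G1] because x (S1 (x) S2) <= Z[G1 x G2]. *)

Definition delta (T : finType) (t : T) : {ffun T -> rat} := [ffun k => (k == t)%:R].

Definition dot (T : finType) (w x : {ffun T -> rat}) : rat := \sum_t w t * x t.

Lemma dot_deltar (T : finType) (t : T) w : dot w (delta t) = w t.
Proof.
rewrite /dot (bigD1 t) //= ffunE eqxx mulr1 big1 ?addr0 // => k /negPf kt.
by rewrite ffunE kt mulr0.
Qed.

Section IntegralBidual.
Variables (T : finType) (X : {ffun T -> rat} -> Prop).

Definition zdual w := forall y, X y -> dot w y \is a Num.int.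

(* zbidual X contains the Z-span of X and has the same dual; it stands in
   for that span. *)
Definition zbidual u := forall w, zdual w -> dot w u \is a Num.int.

Lemma zbidual_gen y : X y -> zbidual y.
Proof. by move=> Xy w /(_ y Xy). Qed.

Lemma zbidualD x y : zbidual x -> zbidual y -> zbidual (x + y).
Proof.
move=> Lx Ly w Xw; rewrite /dot; under eq_bigr do rewrite ffunE mulrDr.
by rewrite big_split rpredD ?Lx ?Ly.
Qed.

Lemma zbidualMz x z : zbidual x -> zbidual (x *~ z).
Proof.
move=> Lx w Xw; rewrite /dot; under eq_bigr do rewrite ffunMzE mulrzAr.
by rewrite -mulrz_suml rpredMz ?Lx.
Qed.

Lemma zbidual_bounded N :
  (forall y t, X y -> N%:R * y t \is a Num.int) ->
  forall u t, zbidual u -> N%:R * u t \is a Num.int.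
Proof.
have dotNdelta t y : dot (delta t *+ N) y = N%:R * y t.
  rewrite /dot (bigD1 t) //= big1 => [|k /negPf kt]; last first.
    by rewrite ffunMnE ffunE kt mul0rn mul0r.
  by rewrite ffunMnE ffunE eqxx addr0 mulr_natl.
move=> XN u t Lu; rewrite -dotNdelta; apply: Lu => y Xy.
by rewrite dotNdelta XN.
Qed.

End IntegralBidual.

Section GroupAlgebra.
Variable gT : finGroupType.
Implicit Types a b c t : QG gT.

Lemma gmulE a b g : gmul a b g = \sum_h a h * b (h^-1 * g)%g.
Proof. by rewrite ffunE. Qed.

Lemma goneE g : gone gT g = (g == 1%g)%:R.
Proof. by rewrite ffunE. Qed.

Lemma gmulr1 a : gmul a (gone gT) = a.
Proof.
apply/ffunP=> g; rewrite gmulE (bigD1 g) //= goneE mulVg eqxx mulr1 big1 ?addr0 //.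
by move=> h hg; rewrite goneE -eq_mulVg1 (negPf hg) mulr0.
Qed.

Lemma gpowS a n : gpow a n.+1 = gmul a (gpow a n).
Proof. by []. Qed.

Lemma ZG_gone : ZG (gone gT).
Proof. by move=> g; rewrite goneE; case: eqP. Qed.

Lemma ZG_delta (g : gT) : ZG (delta g).
Proof. by move=> k; rewrite ffunE; case: eqP. Qed.

Lemma ZG_intclos a : ZG a -> intclos a.
Proof.
move=> Za; exists 1%N, (fun _ => - a); split.
  by move=> i g; rewrite ffunE rpredN.
by rewrite big_ord1 /gpow /= !gmulr1 subrr.
Qed.

Lemma ZG_sumMz n (F : 'I_n -> QG gT) (z : 'I_n -> int) :
  (forall i, ZG (F i)) -> ZG (\sum_(i < n) F i *~ z i).
Proof.
by move=> ZF g; rewrite sum_ffunE; apply: rpred_sum => i _; rewrite ffunMzE rpredMz ?ZF.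
Qed.

Lemma gmul_sumMzl n (F : 'I_n -> QG gT) (z : 'I_n -> int) b :
  gmul (\sum_(i < n) F i *~ z i) b = \sum_(i < n) gmul (F i) b *~ z i.
Proof.
apply/ffunP => g; rewrite sum_ffunE gmulE.
under eq_bigr do rewrite sum_ffunE big_distrl /=.
rewrite exchange_big /=; apply: eq_bigr => i _.
rewrite ffunMzE gmulE mulrz_suml; apply: eq_bigr => h _.
by rewrite ffunMzE mulrzAl.
Qed.

Lemma gmul_sumMzr n (F : 'I_n -> QG gT) (z : 'I_n -> int) a :
  gmul a (\sum_(i < n) F i *~ z i) = \sum_(i < n) gmul a (F i) *~ z i.
Proof.
apply/ffunP => g; rewrite sum_ffunE gmulE.
under eq_bigr do rewrite sum_ffunE big_distrr /=.
rewrite exchange_big /=; apply: eq_bigr => i _.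
rewrite ffunMzE gmulE mulrz_suml; apply: eq_bigr => h _.
by rewrite ffunMzE mulrzAr.
Qed.

Definition gshift t (g : gT) : QG gT := [ffun h => t (h^-1 * g)%g].

Lemma gmul_dot c t g : gmul c t g = dot c (gshift t g).
Proof. by rewrite gmulE; apply: eq_bigr => h _; rewrite ffunE. Qed.

Lemma condG_intro c : (forall t, intclos t -> ZG (gmul c t)) -> condG c.
Proof.
move=> cS; split=> //; apply: ZG_intclos; rewrite -[c]gmulr1.
exact/cS/ZG_intclos/ZG_gone.
Qed.

Definition translates (S : QG gT -> Prop) u :=
  exists2 t, S t & exists g, u = gshift t g.

Lemma translates_delta S g : S (gone gT) -> translates S (delta g).
Proof.
exists (gone gT) => //; exists g.
by apply/ffunP => h; rewrite !ffunE -eq_invg_mul invgK.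
Qed.

Lemma condG_zdual c : zdual (translates (@intclos gT)) c -> condG c.
Proof.
move=> cX; apply: condG_intro => t St g.
by rewrite gmul_dot cX //; exists t => //; exists g.
Qed.

End GroupAlgebra.

Local Notation integralZ := (integralOver (intr : int -> algC)).

Lemma integralZ_Aint x : integralZ x -> x \in Aint.
Proof.
case=> p mon_p px; apply: (root_monic_Aint px); first exact: monic_map.
by apply/polyOverP => k; rewrite coef_map rpred_int.
Qed.

Section Characters.
Variable gT : finGroupType.
Hypothesis abG : abelian [set: gT].
Local Notation G := [set: gT].

Definition grchar (i : Iirr G) (a : QG gT) : algC := \sum_h ratr (a h) * 'chi_i h.

Lemma irr_lin i : 'chi[G]_i \is a linear_char.
Proof. exact/char_abelianP. Qed.

Lemma grcharD i a b : grchar i (a + b) = grchar i a + grchar i b.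
Proof.
by rewrite /grchar -big_split; apply: eq_bigr => h _; rewrite ffunE rmorphD mulrDl.
Qed.

Lemma grchar0 i : grchar i 0 = 0.
Proof. by rewrite /grchar big1 // => h _; rewrite ffunE rmorph0 mul0r. Qed.

Lemma grchar_sum i n (F : 'I_n -> QG gT) :
  grchar i (\sum_(j < n) F j) = \sum_(j < n) grchar i (F j).
Proof. exact: (big_morph _ (grcharD i) (grchar0 i)). Qed.

Lemma grcharM i a b : grchar i (gmul a b) = grchar i a * grchar i b.
Proof.
rewrite /grchar big_distrl /=.
under eq_bigr do rewrite gmulE rmorph_sum /= big_distrl.
rewrite exchange_big /=; apply: eq_bigr => h _.
rewrite big_distrr /= (reindex_inj (mulgI h)) /=; apply: eq_bigr => k _.
by rewrite mulKg rmorphM /= lin_charM ?inE ?irr_lin // mulrACA.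
Qed.

Lemma grchar1 i : grchar i (gone gT) = 1.
Proof.
rewrite /grchar (bigD1 1%g) //= goneE eqxx rmorph1 mul1r lin_char1 ?irr_lin //.
by rewrite big1 ?addr0 // => h /negPf; rewrite goneE => ->; rewrite rmorph0 mul0r.
Qed.

Lemma grcharX i a n : grchar i (gpow a n) = grchar i a ^+ n.
Proof. by elim: n => [|n IHn]; rewrite ?grchar1 // gpowS grcharM IHn exprS. Qed.

Lemma integralZ_irr i h : integralZ ('chi[G]_i h).
Proof.
exists ('X^#[h]%g - 1); first by rewrite monicXnsubC // order_gt0.
rewrite rmorphB /= map_polyXn rmorph1 /root !hornerE.
by rewrite (lin_char_unity_root (irr_lin i)) ?inE ?subrr.
Qed.

Lemma grchar_ZG i a : ZG a -> integralZ (grchar i a).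
Proof.
move=> Za; apply: (big_ind integralZ); [exact: integral0 | exact: integral_add |].
move=> h _; apply: integral_mul; last exact: integralZ_irr.
have := Za h; rewrite intrEfloor => /eqP <-; rewrite ratr_int.
exact: integral_id.
Qed.

(* Applying grchar i to the monic equation of s over Z[G] gives a monic
   equation for grchar i s whose coefficients are integral over Z. *)
Lemma grchar_intclos i (s : QG gT) : intclos s -> integralZ (grchar i s).
Proof.
case=> n [c [Zc sn]].
pose p := 'X^n + \poly_(k < n) oapp (fun j => grchar i (c j)) 0 (insub k).
have mon_p : p \is monic.
  by rewrite monicE lead_coefDl ?lead_coefXn // size_polyXn ltnS size_poly.
apply: (integral_root_monic mon_p).
  rewrite /root /p hornerD hornerXn horner_poly -grcharX.
  rewrite -[X in _ == X](grchar0 i) -sn grcharD grchar_sum; apply/eqP; congr (_ + _).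
  by apply: eq_bigr => k _; rewrite valK grcharM grcharX.
apply/integral_poly => k; rewrite coefD coefXn coef_poly.
apply: integral_add; first by case: eqP => _; [exact: integral1 | exact: integral0].
case: ifP => _; last exact: integral0.
by case: insub => [j|] /=; [exact: grchar_ZG | exact: integral0].
Qed.

Lemma grchar_inversion a g :
  \sum_i grchar i a * 'chi_i (g^-1)%g = ratr (#|gT|%:R * a g).
Proof.
under eq_bigr do rewrite big_distrl /=.
rewrite exchange_big /= (bigD1 g) //= [X in _ + X]big1 ?addr0.
  under eq_bigr do
    rewrite -mulrA -lin_charM ?inE ?irr_lin // mulgV lin_char1 ?irr_lin // mulr1.
  by rewrite sumr_const card_Iirr_abelian // cardsT rmorphM /= rmorph_nat mulr_natl.
move=> h hg; under eq_bigr do rewrite -mulrA -lin_charM ?inE ?irr_lin //.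
rewrite -big_distrr /=.
suff -> : \sum_i 'chi[G]_i (h * g^-1)%g = 0 by rewrite mulr0.
have := second_orthogonality_relation (h * g^-1)%g (in_setT (1%g : gT)).
rewrite class1G inE -eq_mulgV1 (negPf hg) mulr0n => orth.
rewrite -[RHS]orth.
by apply: eq_bigr => i _; rewrite lin_char1 ?irr_lin // conjC1 mulr1.
Qed.

(* The values of grchar on S are algebraic integers, so inverting the
   character transform shows that |G| s has integral coefficients. *)
Lemma intclos_card_int (s : QG gT) g : intclos s -> #|gT|%:R * s g \is a Num.int.
Proof.
move=> Ss; rewrite -Cint_rat; apply: Cint_rat_Aint; first exact: Crat_rat.
rewrite -grchar_inversion rpred_sum // => i _.
by apply: rpredM; [apply/integralZ_Aint/grchar_intclos | apply: Aint_irr].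
Qed.

End Characters.

Lemma least_nat_classical (P : nat -> Prop) n :
  P n -> exists k, P k /\ forall j, P j -> (k <= j)%N.
Proof.
move=> Pn; have [|k [[Pk kmin] _]] :=
  @dec_inh_nat_subset_has_unique_least_element P (fun m => classic (P m)).
  by exists n.
by exists k; split=> // j /kmin/ssrnat.leP.
Qed.

Section DualBasis.
Variables (T : finType) (L : {ffun T -> rat} -> Prop) (N : nat).
Hypothesis LD : forall x y, L x -> L y -> L (x + y).
Hypothesis LMz : forall x z, L x -> L (x *~ z).
Hypothesis L_delta : forall t, L (delta t).
Hypothesis N_gt0 : (0 < N)%N.
Hypothesis L_bounded : forall x t, L x -> N%:R * x t \is a Num.int.

Definition supported (s : seq T) (x : {ffun T -> rat}) :=
  forall t, t \notin s -> x t = 0.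

Lemma L_subMz x b z : L x -> L b -> L (x - b *~ z).
Proof. by move=> Lx Lb; rewrite -mulrNz; apply: LD (LMz _ Lb). Qed.

Lemma supported_subMz s x b z :
  supported s x -> supported s b -> supported s (x - b *~ z).
Proof. by move=> Sx Sb t ht; rewrite !ffunE ffunMzE Sx ?Sb ?mul0rz ?subrr. Qed.

Lemma supported_delta s t : t \in s -> supported s (delta t).
Proof. by move=> ts k; rewrite ffunE; case: eqP => // ->; rewrite ts. Qed.

(* A vector of minimal positive t0-coordinate; minimality makes every other
   t0-coordinate an integral multiple of it (Euclidean division). *)
Lemma pivot_exists s t0 : exists b, [/\ L b, supported (t0 :: s) b, 0 < b t0 &
  forall x, L x -> supported (t0 :: s) x -> x t0 / b t0 \is a Num.int].
Proof.
pose P k := (0 < k)%N /\ exists2 x, L x /\ supported (t0 :: s) x & N%:R * x t0 = k%:R.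
have PN : P N.
  split=> //; exists (delta t0).
    by split; [apply: L_delta | apply/supported_delta/mem_head].
  by rewrite ffunE eqxx mulr1.
have [k [[k_gt0 [b [Lb Sb] Nbk]] kmin]] := least_nat_classical PN.
have N_gt0' : 0 < N%:R :> rat by rewrite ltr0n.
have b_gt0 : 0 < b t0 by rewrite -(pmulr_rgt0 _ N_gt0') Nbk ltr0n.
exists b; split=> // x Lx Sx.
set z := Num.floor (x t0 / b t0); pose y := x - b *~ z.
have y_ge0 : 0 <= y t0.
  by rewrite !ffunE ffunMzE -mulrzl subr_ge0 -ler_pdivlMr ?floor_le.
have y_lt : y t0 < b t0.
  rewrite !ffunE ffunMzE -mulrzl ltrBlDr -[X in _ < X + _]mul1r -mulrDl.
  by rewrite -ltr_pdivrMr // addrC -[X in _ + X]/(1%:~R) -intrD floorD1_gt.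
suff y0 : y t0 = 0.
  move/eqP: y0; rewrite !ffunE ffunMzE -mulrzl subr_eq0 => /eqP ->.
  by rewrite mulfK ?gt_eqF // rpred_int.
apply/eqP; rewrite eq_le y_ge0 andbT leNgt; apply/negP => y_gt0.
have /natrP[k' Nyk'] : N%:R * y t0 \is a Num.nat.
  by rewrite natrEint L_bounded ?mulr_ge0 ?ltW //; apply: L_subMz.
have /kmin : P k'.
  split; first by rewrite -(ltr0n rat) -Nyk' mulr_gt0.
  by exists y; first by split; [apply: L_subMz | apply: supported_subMz].
by rewrite -(ler_nat rat) -Nyk' -Nbk ler_pM2l // leNgt y_lt.
Qed.

(* Echelon construction: the pivot b joins the basis, [e_t0 / b t0] reads off
   its coordinate, and the old dual vectors are corrected to vanish on b. *)
Lemma dual_basis_supported s : exists m (v w : nat -> {ffun T -> rat}), [/\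
  forall j, (j < m)%N -> L (v j),
  forall j x, (j < m)%N -> L x -> supported s x -> dot (w j) x \is a Num.int &
  forall x, supported s x -> forall t, x t = \sum_(j < m) dot (w j) x * v j t].
Proof.
elim: s => [|t0 s [m [v [w [Lv Lw Ew]]]]].
  exists 0%N, (fun _ => 0), (fun _ => 0); split=> // x Sx t.
  by rewrite big_ord0 Sx.
have [b [Lb Sb b_gt0 b_div]] := pivot_exists s t0.
set beta := b t0; have beta_neq0 : beta != 0 by rewrite gt_eqF.
pose rest x := [ffun t => x t - x t0 / beta * b t].
have Srest x : supported (t0 :: s) x -> supported s (rest x).
  move=> Sx t; rewrite ffunE; case: (eqVneq t t0) => [-> _|tt0 ts].
    by rewrite divfK // subrr.
  by rewrite Sx ?Sb ?mulr0 ?subrr // inE negb_or tt0.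
have Lrest x : L x -> supported (t0 :: s) x -> L (rest x).
  move=> Lx Sx; have := b_div _ Lx Sx; rewrite intrEfloor => /eqP ez.
  suff -> : rest x = x - b *~ Num.floor (x t0 / beta) by apply: L_subMz.
  by apply/ffunP => t; rewrite !ffunE ffunMzE -mulrzl ez.
pose w0 := [ffun t => (t == t0)%:R / beta].
pose w' j := [ffun t => w j t - dot (w j) b / beta * (t == t0)%:R].
have dot_w0 x : dot w0 x = x t0 / beta.
  rewrite /dot (bigD1 t0) //= ffunE eqxx mul1r mulrC big1 ?addr0 // => t /negPf.
  by rewrite ffunE => ->; rewrite !mul0r.
have dot_w' j x : dot (w' j) x = dot (w j) (rest x).
  rewrite /dot; under eq_bigr do rewrite ffunE mulrBl.
  under [RHS]eq_bigr do rewrite ffunE mulrBr.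
  rewrite !sumrB; congr (_ - _).
  rewrite (bigD1 t0) //= eqxx mulr1 big1 ?addr0 => [|t /negPf ->]; last first.
    by rewrite mulr0 mul0r.
  under [RHS]eq_bigr do rewrite mulrCA.
  by rewrite -mulr_sumr -/(dot _ _) mulrAC [RHS]mulrAC [dot _ _ * _]mulrC.
exists m.+1, (fun j => if j is j'.+1 then v j' else b),
  (fun j => if j is j'.+1 then w' j' else w0).
split=> [[|j] // /Lv // | [|j] x //= jm Lx Sx | x Sx t].
- by rewrite dot_w0 b_div.
- by rewrite dot_w'; apply: Lw; [|apply: Lrest|apply: Srest].
rewrite big_ord_recl /= dot_w0.
under eq_bigr do rewrite dot_w'.
rewrite -(Ew (rest x)); last exact: Srest.
by rewrite /rest ffunE addrC subrK.
Qed.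

Lemma lattice_dual_basis : exists m (v w : 'I_m -> {ffun T -> rat}), [/\
  forall j, L (v j),
  forall j x, L x -> dot (w j) x \is a Num.int &
  forall t k, delta t k = \sum_j w j t * v j k].
Proof.
have [m [v [w [Lv Lw Ew]]]] := dual_basis_supported (enum T).
have Senum x : supported (enum T) x by move=> t; rewrite mem_enum.
exists m, (fun j => v j), (fun j => w j); split=> [j|j x Lx|t k].
- exact: Lv.
- exact: Lw.
by rewrite (Ew _ (Senum _)); apply: eq_bigr => j _; rewrite dot_deltar.
Qed.

End DualBasis.


Section Tensors.
Variables gT1 gT2 : finGroupType.
Local Notation QG12 := (QG (gT1 * gT2)%type).

Lemma tensE (a : QG gT1) (b : QG gT2) g h : tens a b (g, h) = a g * b h.
Proof. by rewrite ffunE. Qed.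

Lemma gmul_pairE (x y : QG12) g h :
  gmul x y (g, h) = \sum_k \sum_l x (k, l) * y ((k^-1 * g)%g, (l^-1 * h)%g).
Proof. by rewrite gmulE pair_bigA; apply: eq_bigr => -[k l] _. Qed.

Lemma gmul_tens (a a' : QG gT1) (b b' : QG gT2) :
  gmul (tens a b) (tens a' b') = tens (gmul a a') (gmul b b').
Proof.
apply/ffunP => -[g h]; rewrite gmul_pairE tensE !gmulE big_distrl /=.
apply: eq_bigr => k _; rewrite big_distrr /=; apply: eq_bigr => l _.
by rewrite !tensE mulrACA.
Qed.

Lemma ZG_tens (a : QG gT1) (b : QG gT2) : ZG a -> ZG b -> ZG (tens a b).
Proof. by move=> Za Zb [g h]; rewrite tensE rpredM. Qed.

Lemma tensor_span_tens A B (a : QG gT1) (b : QG gT2) :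
  A a -> B b -> tensor_span A B (tens a b).
Proof.
by exists 1%N, (fun _ => 1), (fun _ => a), (fun _ => b); rewrite big_ord1 mulr1z.
Qed.

Lemma tensor_span_sum (A : QG gT1 -> Prop) (B : QG gT2 -> Prop)
    (I : finType) (z : I -> int) a b :
  (forall i, A (a i) /\ B (b i)) ->
  tensor_span A B (\sum_i tens (a i) (b i) *~ z i).
Proof.
move=> ABi; rewrite (big_enum_val (fun i => tens (a i) (b i) *~ z i)) /=.
exists #|I|, (z \o enum_val), (a \o enum_val), (b \o enum_val).
by split=> // i; apply: ABi.
Qed.

Lemma tensor_span_ZG (y : QG12) : tensor_span (@ZG gT1) (@ZG gT2) y <-> ZG y.
Proof.
split=> [[n [z [a [b [Zab ->]]]]] | Zy].
  by apply: ZG_sumMz => i; apply: ZG_tens; case: (Zab i).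
suff -> : y = \sum_p tens (delta p.1) (delta p.2) *~ Num.floor (y p).
  by apply: tensor_span_sum => p; split; apply: ZG_delta.
apply/ffunP => -[g h]; rewrite sum_ffunE (bigD1 (g, h)) //= big1 ?addr0.
  rewrite ffunMzE tensE !ffunE !eqxx mulr1 -mulrzl.
  by have := Zy (g, h); rewrite intrEfloor mulr1 => /eqP ->.
move=> [k l] /= kl; rewrite ffunMzE tensE !ffunE.
case: eqP => [gk | _]; last by rewrite mul0r mul0rz.
case: eqP => [hl | _]; last by rewrite mulr0 mul0rz.
by rewrite -gk -hl eqxx in kl.
Qed.

Definition rcontract (x : QG12) (v : QG gT2) : QG gT1 :=
  [ffun g => \sum_l x (g, l) * v l].

Lemma tensor_rcontract (x : QG12) n (v w : 'I_n -> QG gT2) :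
  (forall h l, delta h l = \sum_j w j h * v j l) ->
  x = \sum_j tens (rcontract x (v j)) (w j).
Proof.
move=> Edelta; apply/ffunP => -[g h]; rewrite sum_ffunE.
under [RHS]eq_bigr do rewrite tensE ffunE big_distrl /=.
rewrite exchange_big /=; transitivity (\sum_l x (g, l) * delta h l).
  rewrite (bigD1 h) //= ffunE eqxx mulr1 big1 ?addr0 // => l /negPf lh.
  by rewrite ffunE lh mulr0.
apply: eq_bigr => l _; rewrite Edelta big_distrr /=.
by apply: eq_bigr => j _; rewrite mulrA mulrAC.
Qed.

Lemma condG_rcontract (x : QG12) v :
  (forall a b, intclos a -> intclos b -> ZG (gmul x (tens a b))) ->
  zbidual (translates (@intclos gT2)) v -> condG (rcontract x v).
Proof.
move=> xSZ Lv; apply: condG_intro => t St g.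
pose xt := [ffun l => \sum_k x (k, l) * t (k^-1 * g)%g].
have -> : gmul (rcontract x v) t g = dot xt v.
  rewrite gmulE /dot; under eq_bigr do rewrite ffunE big_distrl /=.
  rewrite exchange_big; apply: eq_bigr => l _; rewrite ffunE big_distrl /=.
  by apply: eq_bigr => k _; rewrite mulrAC.
apply: Lv => u [b Sb [h ->]].
have -> : dot xt (gshift b h) = gmul x (tens t b) (g, h).
  rewrite gmul_pairE exchange_big; apply: eq_bigr => l _.
  by rewrite !ffunE big_distrl /=; apply: eq_bigr => k _; rewrite tensE mulrA.
exact: xSZ.
Qed.

End Tensors.

Section TensorConductor.
Variables gT1 gT2 : finGroupType.
Local Notation S12 := (tensor_span (@intclos gT1) (@intclos gT2)).
Local Notation R12 := (tensor_span (@ZG gT1) (@ZG gT2)).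
Local Notation I12 := (tensor_span (@condG gT1) (@condG gT2)).

Lemma tensor_condG_conductor x : I12 x -> conductor S12 R12 x.
Proof.
case=> n [z [a [b [Iab ->]]]]; split.
  by exists n, z, a, b; split=> // i; case: (Iab i) => [[Sa _] [Sb _]].
move=> _ [n' [z' [a' [b' [Sab' ->]]]]].
apply/tensor_span_ZG; rewrite gmul_sumMzl; apply: ZG_sumMz => i.
rewrite gmul_sumMzr; apply: ZG_sumMz => j; rewrite gmul_tens.
case: (Iab i) (Sab' j) => [[_ Ia] [_ Ib]] [Sa' Sb'].
by apply: ZG_tens; [apply: Ia | apply: Ib].
Qed.

Hypothesis abG2 : abelian [set: gT2].

Lemma conductor_tensor_condG x : conductor S12 R12 x -> I12 x.
Proof.
case=> _ xS.
have xSZ (a : QG gT1) (b : QG gT2) :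
    intclos a -> intclos b -> ZG (gmul x (tens a b)).
  by move=> Sa Sb; apply/tensor_span_ZG/xS/tensor_span_tens.
pose X := translates (@intclos gT2).
have X_delta h : zbidual X (delta h).
  exact/zbidual_gen/translates_delta/ZG_intclos/ZG_gone.
have X_bounded u l : X u -> #|gT2|%:R * u l \is a Num.int.
  by case=> b Sb [h ->]; rewrite ffunE intclos_card_int.
have card_gt0 : (0 < #|gT2|)%N by rewrite -cardsT cardG_gt0.
have [m [v [w [Lv Lw Edelta]]]] := lattice_dual_basis (@zbidualD _ X)
  (@zbidualMz _ X) X_delta card_gt0 (zbidual_bounded X_bounded).
rewrite (tensor_rcontract x Edelta); under eq_bigr do rewrite -[tens _ _]mulr1z.
apply: tensor_span_sum => j; split; first exact: condG_rcontract.
by apply: condG_zdual => y Xy; apply/Lw/zbidual_gen.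
Qed.

Theorem conductor_tensor x : conductor S12 R12 x <-> I12 x.
Proof. by split; [apply: conductor_tensor_condG | apply: tensor_condG_conductor]. Qed.

End TensorConductor.

Unset Implicit Arguments.
Set Strict Implicit.

Theorem mainTheorem12 (p q e f : nat) (gT1 gT2 : finGroupType)
  (hp : prime p) (hq : prime q) (hpq : p != q)
  (hab1 : abelian [set: gT1]) (hab2 : abelian [set: gT2])
  (hc1 : #|gT1| = (p ^ e)%N) (hc2 : #|gT2| = (q ^ f)%N) :
  forall x : QG (gT1 * gT2)%type,
    conductor (tensor_span (@intclos gT1) (@intclos gT2))
              (tensor_span (@ZG gT1) (@ZG gT2)) x
    <-> tensor_span (@condG gT1) (@condG gT2) x.
Proof. exact: conductor_tensor hab2. Qed.
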